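(* Let $p_k$ be as defined in the context. In the Laurent polynomial ring $\mathbb Z[a^{\pm1},q^{\pm1}]$, for each nonzero integer $i$ set $\ell=|i|-1$ and $k=|i-\tfrac12|-\tfrac12$ (so $k=\ell=i-1$ if $i\ge1$, and $k=-i$, $\ell=-i-1$ if $i\le-1$), and define for $m\in\mathbb Z$ $$x_i(m)=\begin{cases}p_{m-k}\big(a^{-1}q^{-m-k},a^{-1}q^{-m-k+1},\dots,a^{-1}q^{-m+\ell}\big)&\text{if } m>k,\\ 0&\text{if } -\ell\le m\le k,\\ p_{-m-\ell}\big(aq^{m-\ell},aq^{m-\ell+1},\dots,aq^{m+k}\big)&\text{if } m<-\ell.\end{cases}$$ Then for all integers $m\ne n$, $1-aq^{m+n}$ divides $x_i(m)-x_i(n)$ in $\mathbb Z[a^{\pm1},q^{\pm1}]$.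
   Context: For integers $k\ge0$ and variables $\lambda_1,\dots,\lambda_r$, $p_k(\lambda_1,\dots,\lambda_r)=(1-\lambda_1)\cdots(1-\lambda_r)\sum_{\alpha\in\mathbb Z_{\ge0}^r,\,0\le|\alpha|<k}\lambda^\alpha$, with $\lambda^\alpha=\prod\lambda_j^{\alpha_j}$ and $|\alpha|=\sum\alpha_j$. (In the paper these are the fixed-point restrictions of module generators of $K^*_T(\Omega SU(2))$, with $K^0_T=\mathbb Z[a^{\pm1},q^{\pm1}]$ and the fixed points indexed by $\mathbb Z$; the stated divisibility is the GKM condition along the edge between fixed points $m$ and $n$.) *)

From HB Require Import structures.
From mathcomp Require Import all_boot all_order all_algebra fraction.
Set Implicit Arguments. Unset Strict Implicit. Unset Printing Implicit Defensive.
Import Order.TTheory GRing.Theory Num.Theory.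
Local Open Scope ring_scope.

(* The Laurent polynomial ring Z[a^{+-1}, q^{+-1}] is realised as the subring
   of the fraction field Frac(Z[a][q]) consisting of elements P / (a^N q^M). *)
Definition Frac := {fraction {poly {poly int}}}.
Definition tof (x : {poly {poly int}}) : Frac := FracField.tofrac x.

Definition va : Frac := tof (('X : {poly int})%:P).
Definition vq : Frac := tof 'X.

Definition laurent (x : Frac) : Prop :=
  exists (P : {poly {poly int}}) (N M : nat), x = tof P / (va ^+ N * vq ^+ M).

(* p_k(lambda_1..lambda_r) = prod (1 - lambda_j) * sum_{alpha in N^r, |alpha| < k} lambda^alpha.
   Every alpha with |alpha| < k has all entries < k, so alpha ranges over
   functions 'I_r -> 'I_k. *)
Definition pk (k r : nat) (lam : 'I_r -> Frac) : Frac :=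
  (\prod_(j < r) (1 - lam j)) *
  \sum_(alpha : {ffun 'I_r -> 'I_k} | (\sum_(j < r) (alpha j : nat) < k)%N)
     \prod_(j < r) lam j ^+ alpha j.

Definition kI (i : int) : int := if 0 < i then i - 1 else - i.
Definition lI (i : int) : int := `|i| - 1.
Definition nvar (i : int) : nat := absz (kI i + lI i + 1).

Definition xi (i m : int) : Frac :=
  if kI i < m then
    pk (absz (m - kI i)) (fun j : 'I_(nvar i) => va^-1 * vq ^ (- m - kI i + (j : nat)%:Z))
  else if m < - lI i then
    pk (absz (- m - lI i)) (fun j : 'I_(nvar i) => va * vq ^ (m - lI i + (j : nat)%:Z))
  else 0.

From HB Require Import structures.
From mathcomp Require Import all_boot all_order all_algebra fraction.
From mathcomp Require Import ring zify.
Import Order.TTheory GRing.Theory Num.Theory.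
Set Implicit Arguments. Unset Strict Implicit. Unset Printing Implicit Defensive.
Local Open Scope ring_scope.

(* Modulo 1 - a q^(m+n) one may substitute a = q^-(m+n).  This turns x_i(m)
   into an expression T(m, n) which is symmetric in m and n, so that
   x_i(m) = T(m, n) = T(n, m) = x_i(n) modulo 1 - a q^(m+n).  After reversing
   the order of the variables when m and n lie on opposite sides, the symmetry
   is the identity p_M(z^N, ..., z^(N+r)) = p_N(z^M, ..., z^(M+r)) for
   z = q or q^-1, together with the vanishing of p_M at a list containing 1.
   The identity holds by induction on M + N: both sides vanish when M or N is 0,
   and their mixed second difference is symmetric thanks to the q-binomial
   formula h_M(1, z, ..., z^r) (z; z)_r = (z^(M+1); z)_r. *)

Section CompleteHomogeneous.
Variable R : comPzRingType.

Fixpoint sum_monomials_lt (s : seq R) (K : nat) : R :=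
  if s is x :: s' then \sum_(d < K) x ^+ d * sum_monomials_lt s' (K - d)
  else (0 < K)%:R.

Definition complete_hom (s : seq R) (d : nat) : R :=
  sum_monomials_lt s d.+1 - sum_monomials_lt s d.

Lemma sum_monomials_lt0 s : sum_monomials_lt s 0 = 0.
Proof. by case: s => [|x s] /=; rewrite ?big_ord0. Qed.

Lemma sum_monomials_lt1 s : sum_monomials_lt s 1 = 1.
Proof. by elim: s => [|x s IH] //=; rewrite big_ord1 expr0 mul1r subn0 IH. Qed.

Lemma complete_hom0 s : complete_hom s 0 = 1.
Proof. by rewrite /complete_hom sum_monomials_lt1 sum_monomials_lt0 subr0. Qed.

Lemma complete_hom_nil d : complete_hom [::] d = (d == 0)%:R.
Proof. by case: d => [|d]; rewrite /complete_hom /= ?subr0 ?subrr. Qed.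

Lemma complete_hom_cons x s d :
  complete_hom (x :: s) d = \sum_(a < d.+1) x ^+ a * complete_hom s (d - a).
Proof.
rewrite /complete_hom /= big_ord_recr /= subSnn sum_monomials_lt1.
rewrite [RHS]big_ord_recr /= subnn sum_monomials_lt1 sum_monomials_lt0 subr0.
rewrite addrAC -sumrB; congr (_ + _); apply: eq_bigr => a _.
by rewrite -mulrBr subSn // ltnW.
Qed.

Lemma complete_homZ c s d :
  complete_hom (map ( *%R c) s) d = c ^+ d * complete_hom s d.
Proof.
elim: s d => [|x s IH] d /=.
  by rewrite !complete_hom_nil; case: d => [|d]; rewrite ?expr0 ?mul1r ?mulr0.
rewrite !complete_hom_cons mulr_sumr; apply: eq_bigr => a _.
by rewrite IH exprMn mulrACA -exprD subnKC // -ltnS.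
Qed.

Definition geom (z : R) (N r : nat) : seq R := mkseq (fun j => z ^+ (N + j)) r.

Definition qpoch (z : R) (N r : nat) : R := \prod_(j < r) (1 - z ^+ (N + j)).

Definition qbinom (z : R) (r M : nat) : R := complete_hom (geom z 0 r) M.

Lemma geomS z N r : geom z N r.+1 = z ^+ N :: geom z N.+1 r.
Proof.
rewrite /geom /mkseq /= addn0; congr (_ :: _).
rewrite -[in LHS](addn0 1%N) iotaDl -map_comp; apply: eq_map => j /=.
by rewrite addnCA add1n.
Qed.

Lemma complete_hom_geom z N r M :
  complete_hom (geom z N r) M = z ^+ (N * M) * qbinom z r M.
Proof.
have -> : geom z N r = map ( *%R (z ^+ N)) (geom z 0 r).
  by rewrite /geom /mkseq -map_comp; apply: eq_map => j /=; rewrite add0n exprD.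
by rewrite complete_homZ exprM.
Qed.

Lemma qbinom0 z r : qbinom z r 0 = 1.
Proof. exact: complete_hom0. Qed.

Lemma qbinom0S z M : qbinom z 0 M.+1 = 0.
Proof. by rewrite /qbinom /geom /= complete_hom_nil. Qed.

Lemma qbinomSS z r M : qbinom z r.+1 M.+1 = z ^+ M.+1 * qbinom z r M.+1 + qbinom z r.+1 M.
Proof.
rewrite /qbinom geomS expr0 !complete_hom_cons big_ord_recl /= subn0 expr1n mul1r.
rewrite complete_hom_geom mul1n; congr (_ + _).
by apply: eq_bigr => a _; rewrite !expr1n !mul1r /bump add1n subSS.
Qed.

Lemma qbinom_qpoch z r M : qbinom z r.+1 M * qpoch z 1 r = qpoch z M.+1 r.
Proof.
elim: r M => [|r IHr] M.
  rewrite /qpoch !big_ord0 mulr1.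
  by elim: M => [|M IH]; rewrite ?qbinom0 // qbinomSS qbinom0S mulr0 add0r.
elim: M => [|M IH]; first by rewrite qbinom0 mul1r.
rewrite qbinomSS mulrDl IH.
rewrite {1}/qpoch big_ord_recr /= mulrA -(mulrA (z ^+ M.+1)) -/(qpoch z 1 r) IHr /qpoch.
rewrite [\prod_(j < r.+1) (1 - z ^+ (M.+1 + j))]big_ord_recl /= addn0.
rewrite [\prod_(j < r.+1) (1 - z ^+ (M.+2 + j))]big_ord_recr /=.
under [X in _ + _ * X]eq_bigr => j _ do rewrite /bump add1n addnS -addSn.
set P := \prod_(j < r) _.
have -> : z ^+ (M.+2 + r) = z ^+ M.+1 * z ^+ (1 + r) by rewrite -exprD addSnnS addnA.
ring.
Qed.

End CompleteHomogeneous.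

Section GeometricSpecialisation.
Variables (R : idomainType) (z : R).
Hypothesis z_not_root1 : forall j, 1 - z ^+ j.+1 != 0.

Lemma qpoch1_neq0 r : qpoch z 1 r != 0.
Proof. by apply/prodf_neq0 => j _; rewrite add1n z_not_root1. Qed.

Lemma qbinom_cross r M N :
  qbinom z r.+1 M * qpoch z N.+1 r = qbinom z r.+1 N * qpoch z M.+1 r.
Proof.
apply: (mulIf (qpoch1_neq0 r)).
by rewrite mulrAC qbinom_qpoch [RHS]mulrAC qbinom_qpoch mulrC.
Qed.

Variable r : nat.

Definition pgeom (M N : nat) : R :=
  qpoch z N r.+1 * sum_monomials_lt (geom z N r.+1) M.

Definition pgeom_diff2 (M N : nat) : R :=
  pgeom M.+1 N.+1 - pgeom M N.+1 - (pgeom M.+1 N - pgeom M N).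

Lemma pgeom0l N : pgeom 0 N = 0.
Proof. by rewrite /pgeom sum_monomials_lt0 mulr0. Qed.

Lemma pgeom0r M : pgeom M 0 = 0.
Proof. by rewrite /pgeom /qpoch big_ord_recl /= expr0 subrr !mul0r. Qed.

Lemma pgeomS M N :
  pgeom M.+1 N - pgeom M N = qpoch z N r.+1 * z ^+ (N * M) * qbinom z r.+1 M.
Proof. by rewrite /pgeom -mulrBr -/(complete_hom _ _) complete_hom_geom mulrA. Qed.

Lemma pgeom_diff2E M N : pgeom_diff2 M N =
  z ^+ (N * M) * (qbinom z r.+1 M * qpoch z N.+1 r) *
  (z ^+ M - z ^+ (M + N + r.+1) - 1 + z ^+ N).
Proof.
rewrite /pgeom_diff2 !pgeomS.
rewrite [qpoch z N.+1 r.+1]big_ord_recr [qpoch z N r.+1]big_ord_recl /= addn0.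
have -> : \prod_(j < r) (1 - z ^+ (N + bump 0 j)) = qpoch z N.+1 r.
  by apply: eq_bigr => j _; rewrite /bump add1n addnS.
rewrite -/(qpoch z N.+1 r).
have -> : z ^+ (N.+1 * M) = z ^+ (N * M) * z ^+ M by rewrite -exprD mulSn addnC.
have -> : z ^+ (M + N + r.+1) = z ^+ M * z ^+ (N.+1 + r).
  by rewrite -exprD; congr (_ ^+ _); lia.
ring.
Qed.

Lemma pgeom_diff2C M N : pgeom_diff2 M N = pgeom_diff2 N M.
Proof.
rewrite !pgeom_diff2E qbinom_cross mulnC [(N + M)%N]addnC.
by congr (_ * _); ring.
Qed.

Lemma pgeomC M N : pgeom M N = pgeom N M.
Proof.
elim: {M N}(M + N)%N {-2}M {-2}N (leqnn (M + N)) => [|s IH] [|M] [|N] //= le_MN_s;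
  rewrite ?pgeom0l ?pgeom0r //.
have pgeomSS M' N' : pgeom M'.+1 N'.+1 =
    pgeom_diff2 M' N' + pgeom M' N'.+1 + pgeom M'.+1 N' - pgeom M' N'.
  by rewrite /pgeom_diff2; ring.
rewrite !pgeomSS pgeom_diff2C (IH M N.+1) ?(IH M.+1 N) ?(IH M N) //; try lia.
ring.
Qed.

End GeometricSpecialisation.

Section MonomialsAsFunctions.
Variable R : comPzRingType.

Definition ffun_cons r C (p : 'I_C * {ffun 'I_r -> 'I_C}) : {ffun 'I_r.+1 -> 'I_C} :=
  [ffun j => if unlift ord0 j is Some j' then p.2 j' else p.1].

Lemma ffun_cons_bij r C : bijective (@ffun_cons r C).
Proof.
exists (fun a : {ffun 'I_r.+1 -> 'I_C} => (a ord0, [ffun j => a (lift ord0 j)])).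
  case=> a b; rewrite /ffun_cons /= !ffunE unlift_none; congr (_, _).
  by apply/ffunP => j; rewrite !ffunE liftK.
move=> a; apply/ffunP => j; rewrite /ffun_cons !ffunE.
by case: unliftP => [j'|] -> //=; rewrite ffunE.
Qed.

Lemma ffun_cons0 r C p : @ffun_cons r C p ord0 = p.1.
Proof. by rewrite ffunE unlift_none. Qed.

Lemma ffun_consS r C p j : @ffun_cons r C p (lift ord0 j) = p.2 j.
Proof. by rewrite ffunE liftK. Qed.

(* Exponents are bounded by the total degree, so any bound [C >= K] may be used. *)
Lemma sum_ffun_monomials_lt r (lam : nat -> R) C K : (K <= C)%N ->
  \sum_(al : {ffun 'I_r -> 'I_C} | (\sum_(j < r) (al j : nat) < K)%N)
     \prod_(j < r) lam j ^+ al j = sum_monomials_lt (mkseq lam r) K.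
Proof.
elim: r lam K => [|r IH] lam K le_KC.
  case: K le_KC => [|K] _; first by rewrite big_pred0 // => al; rewrite big_ord0.
  rewrite /= (eq_bigl xpredT) => [|al]; last by rewrite big_ord0.
  rewrite (eq_bigr (fun _ => 1)) => [|al _]; last by rewrite big_ord0.
  by rewrite sumr_const card_ffun !card_ord.
rewrite (reindex (@ffun_cons r C)); last exact/onW_bij/ffun_cons_bij.
have -> : mkseq lam r.+1 = lam 0%N :: mkseq (fun j => lam j.+1) r.
  by rewrite /mkseq /= -[in LHS](addn0 1%N) iotaDl -map_comp.
rewrite /=.
under eq_bigl => p do rewrite big_ord_recl ffun_cons0.
under eq_bigr => p _ do rewrite big_ord_recl ffun_cons0.
rewrite -(pair_big_dep xpredT
  (fun (a : 'I_C) b => a + \sum_(j < r) (ffun_cons (a, b) (lift ord0 j) : nat) < K)%N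
  (fun (a : 'I_C) b =>
     lam 0%N ^+ a * \prod_(j < r) lam (lift ord0 j) ^+ ffun_cons (a, b) (lift ord0 j))) /=.
set F := fun d => lam 0%N ^+ d * sum_monomials_lt (mkseq (fun j => lam j.+1) r) (K - d).
rewrite [RHS](big_ord_widen C F le_KC) [RHS]big_mkcond {}/F /=.
apply: eq_bigr => a _; case: ltnP => [lt_aK|le_Ka]; last first.
  by rewrite big_pred0 // => b; rewrite ltnNge (leq_trans le_Ka) ?leq_addr.
rewrite -mulr_sumr -(IH (fun j => lam j.+1) (K - a)%N); last by lia.
congr (_ * _); apply: eq_big => [b|b _].
  by rewrite ltn_subRL; congr (_ + _ < _)%N; apply: eq_bigr => j _; rewrite ffun_consS.
by apply: eq_bigr => j _; rewrite ffun_consS /bump add1n.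
Qed.

End MonomialsAsFunctions.

Lemma tofD x y : tof (x + y) = tof x + tof y. Proof. exact: rmorphD. Qed.
Lemma tofN x : tof (- x) = - tof x. Proof. exact: rmorphN. Qed.
Lemma tofM x y : tof (x * y) = tof x * tof y. Proof. exact: rmorphM. Qed.
Lemma tofX x n : tof (x ^+ n) = tof x ^+ n. Proof. exact: rmorphXn. Qed.
Lemma tof1 : tof 1 = 1. Proof. exact: rmorph1. Qed.

Lemma va_neq0 : va != 0.
Proof. by rewrite /va /tof tofrac_eq0 polyC_eq0 polyX_eq0. Qed.

Lemma vq_neq0 : vq != 0.
Proof. by rewrite /vq /tof tofrac_eq0 polyX_eq0. Qed.

Lemma vqX_neq1 j : vq ^+ j.+1 != 1.
Proof.
rewrite /vq -tofX -tof1 /tof tofrac_eq.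
by apply/negP => /eqP /(congr1 (size : {poly {poly int}} -> nat)); rewrite size_polyXn size_poly1.
Qed.

Lemma laurent_monomE x :
  laurent x <-> exists P N M, x * (va ^+ N * vq ^+ M) = tof P.
Proof.
have mon_neq0 N M : va ^+ N * vq ^+ M != 0.
  by apply: mulf_neq0; apply: expf_neq0; [exact: va_neq0 | exact: vq_neq0].
split => [[P [N [M ->]]]|[P [N [M xE]]]]; exists P, N, M.
  by rewrite divfK ?mon_neq0.
by rewrite -xE mulfK ?mon_neq0.
Qed.

Lemma laurent_tof P : laurent (tof P).
Proof. by apply/laurent_monomE; exists P, 0%N, 0%N; rewrite !expr0 !mulr1. Qed.

Lemma laurent0 : laurent 0.
Proof. by rewrite -(rmorph0 (@FracField.tofrac _)); apply: laurent_tof. Qed.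

Lemma laurent1 : laurent 1.
Proof. by rewrite -tof1; apply: laurent_tof. Qed.

Lemma laurentN x : laurent x -> laurent (- x).
Proof.
move=> /laurent_monomE [P [N [M xE]]]; apply/laurent_monomE; exists (- P), N, M.
by rewrite tofN -xE mulNr.
Qed.

Lemma laurentD x y : laurent x -> laurent y -> laurent (x + y).
Proof.
move=> /laurent_monomE [P1 [N1 [M1 xE]]] /laurent_monomE [P2 [N2 [M2 yE]]].
apply/laurent_monomE.
exists (P1 * ('X%:P ^+ N2 * 'X ^+ M2) + P2 * ('X%:P ^+ N1 * 'X ^+ M1)), (N1 + N2)%N, (M1 + M2)%N.
by rewrite tofD !tofM !tofX -xE -yE !exprD; ring.
Qed.

Lemma laurentM x y : laurent x -> laurent y -> laurent (x * y).
Proof.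
move=> /laurent_monomE [P1 [N1 [M1 xE]]] /laurent_monomE [P2 [N2 [M2 yE]]].
apply/laurent_monomE; exists (P1 * P2), (N1 + N2)%N, (M1 + M2)%N.
by rewrite tofM -xE -yE !exprD; ring.
Qed.

Lemma laurentX x n : laurent x -> laurent (x ^+ n).
Proof.
move=> lx; elim: n => [|n IH]; first by rewrite expr0; apply: laurent1.
by rewrite exprS; apply: laurentM.
Qed.

Lemma laurent_va : laurent va. Proof. exact: laurent_tof. Qed.

Lemma laurent_vaV : laurent va^-1.
Proof.
by apply/laurent_monomE; exists 1, 1%N, 0%N; rewrite expr1 expr0 mulr1 mulVf ?va_neq0 ?tof1.
Qed.

Lemma laurent_vq_expz (e : int) : laurent (vq ^ e).
Proof.
have laurent_vqV : laurent vq^-1.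
  by apply/laurent_monomE; exists 1, 0%N, 1%N; rewrite expr1 expr0 mul1r mulVf ?vq_neq0 ?tof1.
case: e => n; first exact/laurentX/laurent_tof.
by rewrite NegzE -exprz_inv; apply: laurentX.
Qed.

Section LaurentCongruence.
Variable u : Frac.

Definition laurent_eqmod (x y : Frac) :=
  [/\ laurent x, laurent y & exists2 c, laurent c & x - y = (1 - u) * c].

Lemma eqmod_refl x : laurent x -> laurent_eqmod x x.
Proof. by move=> lx; split=> //; exists 0; [exact: laurent0 | rewrite subrr mulr0]. Qed.

Lemma eqmod_sym x y : laurent_eqmod x y -> laurent_eqmod y x.
Proof.
case=> lx ly [c lc xyE]; split=> //; exists (- c); first exact: laurentN.
by rewrite mulrN -xyE opprB.
Qed.

Lemma eqmod_trans x y w : laurent_eqmod x y -> laurent_eqmod y w -> laurent_eqmod x w.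
Proof.
case=> lx _ [c1 lc1 xyE] [_ lw [c2 lc2 ywE]]; split=> //.
exists (c1 + c2); first exact: laurentD.
by rewrite mulrDr -xyE -ywE; ring.
Qed.

Lemma eqmodN x y : laurent_eqmod x y -> laurent_eqmod (- x) (- y).
Proof.
case=> lx ly [c lc xyE]; split; [exact: laurentN | exact: laurentN |].
by exists (- c); [exact: laurentN | rewrite mulrN -xyE opprD].
Qed.

Lemma eqmodD x1 y1 x2 y2 : laurent_eqmod x1 y1 -> laurent_eqmod x2 y2 ->
  laurent_eqmod (x1 + x2) (y1 + y2).
Proof.
case=> lx1 ly1 [c1 lc1 E1] [lx2 ly2 [c2 lc2 E2]].
split; [exact: laurentD | exact: laurentD |].
by exists (c1 + c2); [exact: laurentD | rewrite mulrDr -E1 -E2; ring].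
Qed.

Lemma eqmodM x1 y1 x2 y2 : laurent_eqmod x1 y1 -> laurent_eqmod x2 y2 ->
  laurent_eqmod (x1 * x2) (y1 * y2).
Proof.
case=> lx1 ly1 [c1 lc1 E1] [lx2 ly2 [c2 lc2 E2]].
split; [exact: laurentM | exact: laurentM |].
exists (c1 * x2 + y1 * c2); first by apply: laurentD; apply: laurentM.
have -> : x1 * x2 - y1 * y2 = (x1 - y1) * x2 + y1 * (x2 - y2) by ring.
by rewrite E1 E2; ring.
Qed.

Lemma eqmodX x y n : laurent_eqmod x y -> laurent_eqmod (x ^+ n) (y ^+ n).
Proof.
move=> xy; elim: n => [|n IH]; first by rewrite !expr0; apply/eqmod_refl/laurent1.
by rewrite !exprS; apply: eqmodM.
Qed.

Lemma eqmod_pk K r (f g : 'I_r -> Frac) :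
  (forall j, laurent_eqmod (f j) (g j)) -> laurent_eqmod (pk K f) (pk K g).
Proof.
move=> fg; have eqmod1 := eqmod_refl laurent1.
apply: eqmodM.
  apply: (big_ind2 laurent_eqmod) => // [? ? ? ? | j _]; first exact: eqmodM.
  by apply: eqmodD => //; apply: eqmodN.
apply: (big_ind2 laurent_eqmod) => [|? ? ? ? | al _]; first exact/eqmod_refl/laurent0.
  exact: eqmodD.
apply: (big_ind2 laurent_eqmod) => // [? ? ? ? | j _]; first exact: eqmodM.
exact: eqmodX.
Qed.

End LaurentCongruence.

Lemma eqmod_vaV (s : int) : laurent_eqmod (va * vq ^ s) va^-1 (vq ^ s).
Proof.
split; [exact: laurent_vaV | exact: laurent_vq_expz |].
exists va^-1; first exact: laurent_vaV.
by rewrite mulrBl mul1r [va * _]mulrC -mulrA mulfV ?va_neq0 ?mulr1.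
Qed.

Lemma eqmod_va (s : int) : laurent_eqmod (va * vq ^ s) va (vq ^ (- s)).
Proof.
have vqsK : vq ^ s * vq ^ (- s) = 1.
  by rewrite -expfzDr ?vq_neq0 // subrr expr0z.
split; [exact: laurent_va | exact: laurent_vq_expz |].
exists (- vq ^ (- s)); first exact/laurentN/laurent_vq_expz.
by rewrite mulrN mulrBl mul1r -mulrA vqsK mulr1; ring.
Qed.

Lemma eq_pk K r (f g : 'I_r -> Frac) : f =1 g -> pk K f = pk K g.
Proof.
move=> fg; rewrite /pk; congr (_ * _); first by apply: eq_bigr => j _; rewrite fg.
by apply: eq_bigr => al _; apply: eq_bigr => j _; rewrite fg.
Qed.

Lemma pk_perm K r (s t : 'I_r -> 'I_r) (g : 'I_r -> Frac) :
  cancel s t -> cancel t s -> pk K (g \o s) = pk K g.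
Proof.
move=> sK tK; have s_inj := can_inj sK.
pose h (al : {ffun 'I_r -> 'I_K}) : {ffun 'I_r -> 'I_K} := [ffun j => al (t j)].
have h_inj : injective h.
  by move=> a b /ffunP ab; apply/ffunP => j; have := ab (s j); rewrite !ffunE sK.
rewrite /pk; congr (_ * _); first by rewrite [RHS](reindex_inj s_inj).
rewrite [RHS](reindex_inj h_inj); apply: eq_big => al.
  rewrite [in RHS](reindex_inj s_inj); congr (_ < _)%N.
  by apply: eq_bigr => j _; rewrite ffunE sK.
by move=> _; rewrite [in RHS](reindex_inj s_inj); apply: eq_bigr => j _; rewrite ffunE sK.
Qed.

Lemma pk_eq0 K r (f : 'I_r -> Frac) j0 : f j0 = 1 -> pk K f = 0.
Proof. by move=> fj0; rewrite /pk (bigD1 j0) //= fj0 subrr !mul0r. Qed.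

Lemma pk_geom (z : Frac) K N r :
  pk K (fun j : 'I_r => z ^+ (N + j)) = qpoch z N r * sum_monomials_lt (geom z N r) K.
Proof. by rewrite /pk (sum_ffun_monomials_lt _ (fun j => z ^+ (N + j))). Qed.

Lemma pk_expzC (z : Frac) r (e f : int) :
  (forall j, 1 - z ^+ j.+1 != 0) -> 0 <= e -> 0 <= f ->
  pk (absz e) (fun j : 'I_r.+1 => z ^ (f + j%:Z)) =
  pk (absz f) (fun j : 'I_r.+1 => z ^ (e + j%:Z)).
Proof.
case: e f => [M|//] [N|//] z_not_root1 _ _ /=.
have expzE (L : nat) : (fun j : 'I_r.+1 => z ^ (L%:Z + j%:Z)) =1 (fun j => z ^+ (L + j)).
  by move=> j; rewrite -PoszD.
by rewrite !(eq_pk _ (expzE _)) !pk_geom; apply: pgeomC.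
Qed.

Lemma vq_not_root1 j : 1 - vq ^+ j.+1 != 0.
Proof. by rewrite subr_eq0 eq_sym vqX_neq1. Qed.

Lemma vqV_not_root1 j : 1 - vq^-1 ^+ j.+1 != 0.
Proof. by rewrite exprVn subr_eq0 eq_sym invr_eq1 vqX_neq1. Qed.

Lemma pk_vqC r (e f : int) : 0 <= e -> 0 <= f ->
  pk (absz e) (fun j : 'I_r.+1 => vq ^ (f + j%:Z)) =
  pk (absz f) (fun j : 'I_r.+1 => vq ^ (e + j%:Z)).
Proof. exact: pk_expzC vq_not_root1. Qed.

Lemma pk_vq_revC r (e f a b : int) : 0 <= e -> 0 <= f ->
  a + f + r%:Z = 0 -> b + e + r%:Z = 0 ->
  pk (absz e) (fun j : 'I_r.+1 => vq ^ (a + j%:Z)) =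
  pk (absz f) (fun j : 'I_r.+1 => vq ^ (b + j%:Z)).
Proof.
move=> e_ge0 f_ge0 afr0 ber0.
have revE (c L : int) : c + L + r%:Z = 0 ->
    (fun j : 'I_r.+1 => vq ^ (c + j%:Z)) =1
    (fun j : 'I_r.+1 => vq^-1 ^ (L + j%:Z)) \o @rev_ord r.+1.
  by move=> cLr0 j; rewrite /= exprz_inv; congr (vq ^ _); have := ltn_ord j; lia.
rewrite (eq_pk _ (revE _ _ afr0)) (eq_pk _ (revE _ _ ber0)).
rewrite !(pk_perm _ _ rev_ordK rev_ordK).
exact: pk_expzC vqV_not_root1 e_ge0 f_ge0.
Qed.

Lemma pk_vq_eq0 K r (e : int) : e <= 0 -> - e <= r%:Z ->
  pk K (fun j : 'I_r.+1 => vq ^ (e + j%:Z)) = 0.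
Proof.
move=> e_le0 e_ger.
have lt_er : (absz e < r.+1)%N by lia.
apply: (@pk_eq0 _ _ _ (Ordinal lt_er)) => /=.
by rewrite (_ : e + _ = 0) ?expr0z //; lia.
Qed.

Section FixedPointRestrictions.
Variables k l : nat.

Definition xkl (m : int) : Frac :=
  if k%:Z < m then
    pk (absz (m - k%:Z)) (fun j : 'I_(k + l).+1 => va^-1 * vq ^ (- m - k%:Z + j%:Z))
  else if m < - l%:Z then
    pk (absz (- m - l%:Z)) (fun j : 'I_(k + l).+1 => va * vq ^ (m - l%:Z + j%:Z))
  else 0.

(* [xkl m] with [a] replaced by [q^-(m + n)]. *)
Definition xkl_subst (m n : int) : Frac :=
  if k%:Z < m then
    pk (absz (m - k%:Z)) (fun j : 'I_(k + l).+1 => vq ^ (n - k%:Z + j%:Z))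
  else if m < - l%:Z then
    pk (absz (- m - l%:Z)) (fun j : 'I_(k + l).+1 => vq ^ (- n - l%:Z + j%:Z))
  else 0.

Lemma eqmod_xkl_subst m n : laurent_eqmod (va * vq ^ (m + n)) (xkl m) (xkl_subst m n).
Proof.
have vq_shift (s t : int) : vq ^ (s + t) = vq ^ s * vq ^ t by rewrite expfzDr ?vq_neq0.
rewrite /xkl /xkl_subst; case: ifP => _; [|case: ifP => _].
- apply: eqmod_pk => j.
  rewrite (_ : n - k%:Z + j%:Z = (m + n) + (- m - k%:Z + j%:Z)) ?(vq_shift (m + n)); last by lia.
  exact: eqmodM (eqmod_vaV _) (eqmod_refl _ (laurent_vq_expz _)).
- apply: eqmod_pk => j.
  rewrite (_ : - n - l%:Z + j%:Z = - (m + n) + (m - l%:Z + j%:Z)) ?(vq_shift (- (m + n))); last by lia.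
  exact: eqmodM (eqmod_va _) (eqmod_refl _ (laurent_vq_expz _)).
- exact/eqmod_refl/laurent0.
Qed.

Lemma xkl_substC m n : xkl_subst m n = xkl_subst n m.
Proof.
rewrite /xkl_subst.
case: ifP => km; [|case: ifP => ml]; case: ifP => kn; try case: ifP => nl.
- by apply: pk_vqC; lia.
- by apply: pk_vq_revC; lia.
- by apply: pk_vq_eq0; lia.
- by apply: pk_vq_revC; lia.
- by apply: pk_vqC; lia.
- by apply: pk_vq_eq0; lia.
- by rewrite pk_vq_eq0 //; lia.
- by rewrite pk_vq_eq0 //; lia.
- by [].
Qed.

End FixedPointRestrictions.

Lemma xi_xkl i (k l : nat) m : kI i = k%:Z -> lI i = l%:Z -> xi i m = xkl k l m.
Proof.
move=> kiE liE; rewrite /xi /xkl /nvar kiE liE.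
by have -> : absz (k%:Z + l%:Z + 1) = (k + l).+1 by rewrite -!PoszD addn1.
Qed.

Theorem mainTheorem9 (i : int) (hi : i != 0) (m n : int) (hmn : m != n) :
  exists c : Frac, laurent c /\ xi i m - xi i n = (1 - va * vq ^ (m + n)) * c.
Proof.
have [k kiE] : exists k : nat, kI i = k%:Z.
  by exists (absz (kI i)); rewrite gez0_abs // /kI; case: ifP; lia.
have [l liE] : exists l : nat, lI i = l%:Z.
  exists (absz (lI i)); rewrite gez0_abs // /lI.
  have : 0 < `|i| by rewrite normr_gt0.
  lia.
rewrite !(xi_xkl _ kiE liE).
have [_ _ [c lc ->]] : laurent_eqmod (va * vq ^ (m + n)) (xkl k l m) (xkl k l n).
  apply: eqmod_trans (eqmod_xkl_subst k l m n) _.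
  rewrite xkl_substC addrC; exact/eqmod_sym/eqmod_xkl_subst.
by exists c.
Qed.
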